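(* Let $d\ge 1$, $\bm z\in\mathbb{R}^d$ and $\alpha\ge 1$, and let $\bm p^\star = \alpha\text{-entmax}(\bm z)$. Let $\mathcal S=\{i: p^\star_i>0\}$ be the support of $\bm p^\star$. Define, for $i\in\mathcal S$, $\tilde p_i = \dfrac{(p_i^\star)^{2-\alpha}}{\sum_{j\in\mathcal S}(p_j^\star)^{2-\alpha}}$ and $\tilde p_i=0$ for $i\notin\mathcal S$, and $h_i = -p_i^\star\log p_i^\star$ (with $0\log 0=0$). Then, at every $(\bm z,\alpha)$ at which $\alpha\mapsto \alpha\text{-entmax}(\bm z)$ is differentiable (for $\alpha=1$: the one-sided derivative from $\alpha\to1^+$), the $i$-th component of the Jacobian $\bm g = \partial\, \alpha\text{-entmax}(\bm z)/\partial\alpha$ is $$ g_i = \begin{cases} \dfrac{p_i^\star-\tilde p_i}{(\alpha-1)^2} + \dfrac{h_i - \tilde p_i\sum_j h_j}{\alpha-1}, & \alpha>1,\\[2ex] \dfrac{h_i\log p_i^\star - p_i^\star\sum_j h_j\log p_j^\star}{2}, & \alpha=1,\end{cases}$$ where in the $\alpha=1$ case $h_i\log p_i^\star=-p_i^\star\log^2 p_i^\star$, i.e. $g_i = \tfrac12\big(-p_i^\star\log^2p_i^\star + p_i^\star\sum_j p_j^\star\log^2 p_j^\star\big)$. In particular $g_i=0$ whenever $p_i^\star=0$.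
   Context: The probability simplex is $\triangle^d=\{\bm p\in\mathbb{R}^d: p_i\ge 0,\ \sum_i p_i=1\}$. For $\alpha\ge1$ the Tsallis entropy is $\mathsf H^{T}_\alpha(\bm p)=\frac{1}{\alpha(\alpha-1)}\sum_j (p_j-p_j^\alpha)$ for $\alpha\neq1$ and $\mathsf H^T_1(\bm p)=-\sum_j p_j\log p_j$ (Shannon entropy). The $\alpha$-entmax mapping is $\alpha\text{-entmax}(\bm z)=\arg\max_{\bm p\in\triangle^d}\ \bm p^\top\bm z+\mathsf H^T_\alpha(\bm p)$ (the maximizer is unique). For $\alpha=1$ it equals softmax; for $\alpha>1$ the solution has the form $p^\star_i=[(\alpha-1)(z_i-\tau^\star)]_+^{1/(\alpha-1)}$ for a unique scalar $\tau^\star$ ensuring $\sum_i p_i^\star=1$, where $[t]_+=\max(t,0)$. *)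

From Stdlib Require Import Reals Lra.
Open Scope R_scope.

(* Vectors in R^d are functions nat -> R; only indices i < d matter. *)
Fixpoint rsum (n : nat) (f : nat -> R) : R :=
  match n with O => 0 | S m => rsum m f + f m end.

Definition xlogx (x : R) : R := if Rlt_dec 0 x then x * ln x else 0.

Definition rpow (x a : R) : R := if Rlt_dec 0 x then Rpower x a else 0.

Definition in_simplex (d : nat) (p : nat -> R) : Prop :=
  (forall i, (i < d)%nat -> 0 <= p i) /\ rsum d p = 1.

Definition tsallis (d : nat) (alpha : R) (p : nat -> R) : R :=
  if Req_EM_T alpha 1 then - rsum d (fun j => xlogx (p j))
  else / (alpha * (alpha - 1)) * rsum d (fun j => p j - rpow (p j) alpha).

Definition entmax_obj (d : nat) (alpha : R) (z p : nat -> R) : R :=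
  rsum d (fun i => p i * z i) + tsallis d alpha p.

Definition is_entmax (d : nat) (alpha : R) (z p : nat -> R) : Prop :=
  in_simplex d p /\
  forall q, in_simplex d q -> entmax_obj d alpha z q <= entmax_obj d alpha z p.

Definition right_deriv (f : R -> R) (x l : R) : Prop :=
  forall eps, 0 < eps -> exists delta, 0 < delta /\
    forall h, 0 < h < delta -> Rabs ((f (x + h) - f x) / h - l) < eps.

Definition ptilde (d : nat) (alpha : R) (p : nat -> R) (i : nat) : R :=
  if Rlt_dec 0 (p i) then
    Rpower (p i) (2 - alpha) /
      rsum d (fun j => if Rlt_dec 0 (p j) then Rpower (p j) (2 - alpha) else 0)
  else 0.

Definition hneg (p : nat -> R) (i : nat) : R := - xlogx (p i).

(* The objective  sum_k p_k z_k + H^T_alpha(p)  is a sum of functions of the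
   single coordinates p_k, so moving a little mass between two support coordinates
   shows (Fermat's rule) that on the support of p* = alpha-entmax(z)
     p_i^(alpha-1) - (alpha-1) z_i           does not depend on i   (alpha > 1),
     ln p_i - z_i                            does not depend on i   (alpha = 1),
   and an entropy argument shows that softmax has full support.
   - alpha > 1: differentiating the first identity in alpha (the support cannot
     shrink just to the right of alpha) gives g_i = K w_i + u_i with
     w_i = p_i^(2-alpha) on the support, u_i = p_i/(alpha-1)^2 + h_i/(alpha-1) and
     one unknown constant K; off the support g_i = 0 since p_i >= 0 is minimal there.
   - alpha = 1: only a right derivative exists.  Expanding p_i^h = exp(h ln p_i) to
     second order in the identity at 1 + h and letting h -> 0+ gives
     g_i = K p_i - p_i (ln p_i)^2 / 2.
   In both cases the coordinates of P(a) sum to 1, so sum_i g_i = 0, which fixes K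
   (lemma zero_sum_affine) and yields the stated formulas. *)

From Stdlib Require Import Reals Lra Lia.
Open Scope R_scope.

Lemma rsum_ext n f g : (forall k, (k < n)%nat -> f k = g k) -> rsum n f = rsum n g.
Proof.
  induction n as [|n IH]; simpl; intros H; [reflexivity|].
  rewrite IH, H; [reflexivity|lia|intros; apply H; lia].
Qed.

Lemma rsum_plus n f g : rsum n (fun k => f k + g k) = rsum n f + rsum n g.
Proof. induction n as [|n IH]; simpl; [lra|rewrite IH; lra]. Qed.

Lemma rsum_scal n c f : rsum n (fun k => c * f k) = c * rsum n f.
Proof. induction n as [|n IH]; simpl; [lra|rewrite IH; lra]. Qed.

Lemma rsum_nonneg n f : (forall k, (k < n)%nat -> 0 <= f k) -> 0 <= rsum n f.
Proof.
  induction n as [|n IH]; simpl; intros H; [lra|].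
  assert (0 <= f n) by (apply H; lia).
  assert (0 <= rsum n f) by (apply IH; intros; apply H; lia). lra.
Qed.

Lemma rsum_ge_term n f m :
  (forall k, (k < n)%nat -> 0 <= f k) -> (m < n)%nat -> f m <= rsum n f.
Proof.
  induction n as [|n IH]; intros H Hm; [lia|]. simpl.
  destruct (Nat.eq_dec m n) as [->|Hne].
  - assert (0 <= rsum n f) by (apply rsum_nonneg; intros; apply H; lia). lra.
  - assert (f m <= rsum n f) by (apply IH; [intros; apply H|]; lia).
    assert (0 <= f n) by (apply H; lia). lra.
Qed.

Lemma rsum_pos_term n f : 0 < rsum n f -> exists m, (m < n)%nat /\ 0 < f m.
Proof.
  induction n as [|n IH]; simpl; intros H; [lra|].
  destruct (Rlt_le_dec 0 (f n)) as [Hn|Hn]; [exists n; split; [lia|assumption]|].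
  destruct (IH ltac:(lra)) as [m [Hm Hfm]]. exists m; split; [lia|assumption].
Qed.

Lemma rsum_update n f i a : (i < n)%nat ->
  rsum n (fun k => if Nat.eq_dec k i then a else f k) = rsum n f + (a - f i).
Proof.
  induction n as [|n IH]; intros Hi; [lia|]. simpl.
  destruct (Nat.eq_dec n i) as [<-|Hne].
  - rewrite (rsum_ext n _ f); [lra|].
    intros k Hk. destruct (Nat.eq_dec k n); [lia|reflexivity].
  - rewrite IH by lia. lra.
Qed.

(* If g = K w + u and g sums to zero, the common coefficient K is determined:
   this is how the unknown Lagrange-multiplier derivative is eliminated. *)
Lemma zero_sum_affine n (g w u : nat -> R) K :
  (forall k, (k < n)%nat -> g k = K * w k + u k) ->
  rsum n g = 0 -> rsum n w <> 0 ->
  forall i, (i < n)%nat -> g i = u i - w i / rsum n w * rsum n u.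
Proof.
  intros Hg Hsum HW i Hi.
  assert (HK : K * rsum n w + rsum n u = 0).
  { rewrite <- Hsum, <- rsum_scal, <- rsum_plus. symmetry. exact (rsum_ext n _ _ Hg). }
  rewrite (Hg i Hi).
  replace K with (- rsum n u / rsum n w) by (field_simplify_eq; [lra|assumption]).
  field. assumption.
Qed.

Definition pert (p : nat -> R) (i j : nat) (t : R) (k : nat) : R :=
  if Nat.eq_dec k i then p i + t else if Nat.eq_dec k j then p j - t else p k.

Lemma rsum_pert n (G : nat -> R -> R) p i j t :
  i <> j -> (i < n)%nat -> (j < n)%nat ->
  rsum n (fun k => G k (pert p i j t k)) =
  rsum n (fun k => G k (p k))
  + (G i (p i + t) - G i (p i)) + (G j (p j - t) - G j (p j)).
Proof.
  intros Hij Hi Hj.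
  rewrite (rsum_ext n _ (fun k => if Nat.eq_dec k i then G i (p i + t) else
     (fun k => if Nat.eq_dec k j then G j (p j - t) else G k (p k)) k)).
  - rewrite rsum_update, rsum_update by assumption.
    destruct (Nat.eq_dec i j); [contradiction|]. lra.
  - intros k Hk. unfold pert.
    destruct (Nat.eq_dec k i) as [->|]; [reflexivity|].
    destruct (Nat.eq_dec k j) as [->|]; reflexivity.
Qed.

Lemma pert_simplex d p i j t : in_simplex d p -> i <> j -> (i < d)%nat -> (j < d)%nat ->
  0 <= p i + t -> 0 <= p j - t -> in_simplex d (pert p i j t).
Proof.
  intros [Hnn Hsum] Hij Hi Hj Ht1 Ht2. split.
  - intros k Hk. unfold pert.
    destruct (Nat.eq_dec k i); [assumption|]. destruct (Nat.eq_dec k j); auto.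
  - rewrite (rsum_pert d (fun _ x => x)) by assumption.
    change (rsum d (fun k => p k)) with (rsum d p). lra.
Qed.

(** * The entmax objective is separable *)

Definition tsallis_density (a x : R) : R :=
  if Req_EM_T a 1 then - xlogx x else (x - rpow x a) / (a * (a - 1)).

Lemma entmax_obj_sum d a z p :
  entmax_obj d a z p = rsum d (fun k => p k * z k + tsallis_density a (p k)).
Proof.
  unfold entmax_obj, tsallis, tsallis_density. rewrite rsum_plus. f_equal.
  destruct (Req_EM_T a 1).
  - rewrite (rsum_ext d (fun k => - xlogx (p k)) (fun k => -1 * xlogx (p k)))
      by (intros; ring).
    rewrite rsum_scal. ring.
  - unfold Rdiv. rewrite <- rsum_scal. apply rsum_ext. intros. ring.
Qed.

Lemma entmax_obj_pert d a z p i j t : i <> j -> (i < d)%nat -> (j < d)%nat ->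
  entmax_obj d a z (pert p i j t) - entmax_obj d a z p =
  t * (z i - z j)
  + (tsallis_density a (p i + t) - tsallis_density a (p i))
  + (tsallis_density a (p j - t) - tsallis_density a (p j)).
Proof.
  intros Hij Hi Hj. rewrite !entmax_obj_sum.
  rewrite (rsum_pert d (fun k x => x * z k + tsallis_density a x)) by assumption. ring.
Qed.

(* Forms of the Stdlib derivative rules stated on explicit lambda terms,
   which makes them usable by [apply] on goals as they arise. *)
Lemma dpl_eq f x l l' : derivable_pt_lim f x l -> l = l' -> derivable_pt_lim f x l'.
Proof. intros H <-; exact H. Qed.

Lemma dpl_const c x : derivable_pt_lim (fun _ => c) x 0.
Proof. apply derivable_pt_lim_const. Qed.

Lemma dpl_id x : derivable_pt_lim (fun y => y) x 1.
Proof. apply derivable_pt_lim_id. Qed.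

Lemma dpl_plus f g x a b : derivable_pt_lim f x a -> derivable_pt_lim g x b ->
  derivable_pt_lim (fun y => f y + g y) x (a + b).
Proof. apply derivable_pt_lim_plus. Qed.

Lemma dpl_minus f g x a b : derivable_pt_lim f x a -> derivable_pt_lim g x b ->
  derivable_pt_lim (fun y => f y - g y) x (a - b).
Proof. apply derivable_pt_lim_minus. Qed.

Lemma dpl_mult f g x a b : derivable_pt_lim f x a -> derivable_pt_lim g x b ->
  derivable_pt_lim (fun y => f y * g y) x (a * g x + f x * b).
Proof. apply derivable_pt_lim_mult. Qed.

Lemma dpl_comp f g x a b : derivable_pt_lim f x a -> derivable_pt_lim g (f x) b ->
  derivable_pt_lim (fun y => g (f y)) x (b * a).
Proof. apply derivable_pt_lim_comp. Qed.

Lemma dpl_local f g x l r : 0 < r -> (forall y, Rabs (y - x) < r -> f y = g y) ->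
  derivable_pt_lim f x l -> derivable_pt_lim g x l.
Proof.
  intros Hr He H eps Heps. destruct (H eps Heps) as [del Hd].
  assert (Hm : 0 < Rmin del r) by (apply Rmin_pos; [apply cond_pos|lra]).
  exists (mkposreal _ Hm). intros h Hh Hha. simpl in Hha.
  pose proof (Rmin_l del r); pose proof (Rmin_r del r).
  rewrite <- (He (x + h)), <- (He x).
  - apply Hd; [assumption|lra].
  - unfold Rminus; rewrite Rplus_opp_r, Rabs_R0; lra.
  - replace (x + h - x) with h by ring. lra.
Qed.

Lemma dpl_shift_plus f x l : derivable_pt_lim f x l ->
  derivable_pt_lim (fun t => f (x + t)) 0 l.
Proof.
  intros H eps Heps. destruct (H eps Heps) as [del Hd]. exists del. intros h Hh Hha.
  rewrite Rplus_0_l, Rplus_0_r. exact (Hd h Hh Hha).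
Qed.

Lemma dpl_shift_minus f x l : derivable_pt_lim f x l ->
  derivable_pt_lim (fun t => f (x - t)) 0 (- l).
Proof.
  intros H eps Heps. destruct (H eps Heps) as [del Hd]. exists del. intros h Hh Hha.
  rewrite Rplus_0_l, Rminus_0_r.
  assert (Hm : - h <> 0) by lra.
  assert (Hma : Rabs (- h) < del) by (rewrite Rabs_Ropp; exact Hha).
  specialize (Hd (- h) Hm Hma).
  replace ((f (x - h) - f x) / h - - l) with (- ((f (x + - h) - f x) / - h - l))
    by (unfold Rminus; field; exact Hh).
  rewrite Rabs_Ropp. exact Hd.
Qed.

Lemma fermat_max f x l r : 0 < r -> (forall y, x - r < y < x + r -> f y <= f x) ->
  derivable_pt_lim f x l -> l = 0.
Proof.
  intros Hr Hmax H.
  rewrite <- (derive_pt_eq_0 f x l (exist _ l H) H).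
  apply (deriv_maximum f (x - r) (x + r)); [lra|lra|].
  intros y Hy1 Hy2. apply Hmax; lra.
Qed.

Lemma derive_xlogx x : 0 < x -> derivable_pt_lim xlogx x (ln x + 1).
Proof.
  intros Hx. apply (dpl_local (fun y => y * ln y) _ _ _ x Hx).
  - intros y Hy. apply Rabs_def2 in Hy. unfold xlogx.
    destruct (Rlt_dec 0 y); [reflexivity|lra].
  - apply (dpl_eq _ _ (1 * ln x + x * / x)).
    + apply dpl_mult; [apply dpl_id|apply derivable_pt_lim_ln; exact Hx].
    + field. lra.
Qed.

Lemma derive_rpow x a : 0 < x -> derivable_pt_lim (fun y => rpow y a) x (a * Rpower x (a - 1)).
Proof.
  intros Hx. apply (dpl_local (fun y => Rpower y a) _ _ _ x Hx).
  - intros y Hy. apply Rabs_def2 in Hy. unfold rpow.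
    destruct (Rlt_dec 0 y); [reflexivity|lra].
  - apply derivable_pt_lim_power. exact Hx.
Qed.

Lemma derive_tsallis_density_gt a x : a <> 1 -> 0 < x ->
  derivable_pt_lim (tsallis_density a) x ((1 - a * Rpower x (a - 1)) / (a * (a - 1))).
Proof.
  intros Ha Hx. unfold tsallis_density. destruct (Req_EM_T a 1); [contradiction|].
  apply (dpl_eq _ _ ((1 - a * Rpower x (a - 1)) * / (a * (a - 1))
                     + (x - rpow x a) * 0)); [|unfold Rdiv; ring].
  apply (dpl_mult (fun y => y - rpow y a) (fun _ => / (a * (a - 1)))).
  - apply dpl_minus; [apply dpl_id|apply derive_rpow; exact Hx].
  - apply dpl_const.
Qed.

Lemma derive_tsallis_density_one x : 0 < x ->
  derivable_pt_lim (tsallis_density 1) x (- (ln x + 1)).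
Proof.
  intros Hx. unfold tsallis_density. destruct (Req_EM_T 1 1); [|lra].
  apply (derivable_pt_lim_opp xlogx). apply derive_xlogx. exact Hx.
Qed.

(** * First-order optimality conditions *)

(* On the support of the maximizer, the marginal gain z_k + density'(p_k) is the
   same for every coordinate: transferring a little mass between two support
   points cannot increase the objective. *)
Lemma entmax_stationary d a z p i j li lj :
  is_entmax d a z p -> (i < d)%nat -> (j < d)%nat -> 0 < p i -> 0 < p j ->
  derivable_pt_lim (tsallis_density a) (p i) li ->
  derivable_pt_lim (tsallis_density a) (p j) lj ->
  z i + li = z j + lj.
Proof.
  intros [Hs Hopt] Hi Hj Hpi Hpj Hdi Hdj.
  destruct (Nat.eq_dec i j) as [<-|Hij].
  { rewrite (uniqueness_limite _ _ _ _ Hdi Hdj). reflexivity. }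
  set (gain := fun t => t * (z i - z j)
    + (tsallis_density a (p i + t) - tsallis_density a (p i))
    + (tsallis_density a (p j - t) - tsallis_density a (p j))).
  assert (Hmax : forall t, 0 - Rmin (p i) (p j) < t < 0 + Rmin (p i) (p j) ->
                 gain t <= gain 0).
  { intros t Ht. pose proof (Rmin_l (p i) (p j)); pose proof (Rmin_r (p i) (p j)).
    unfold gain. rewrite <- (entmax_obj_pert d a z p i j t) by assumption.
    rewrite Rplus_0_r, Rminus_0_r, !Rminus_diag, Rmult_0_l, !Rplus_0_r.
    apply Rle_minus, Hopt, pert_simplex; (assumption || lra). }
  assert (Hgain : derivable_pt_lim gain 0 ((z i - z j) + (li - 0) + (- lj - 0))).
  { apply dpl_plus; [apply dpl_plus|]; try apply dpl_minus; try apply dpl_const.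
    - apply (dpl_eq _ _ (1 * (z i - z j) + 0 * 0)); [|ring].
      apply (dpl_mult (fun t => t) (fun _ => z i - z j)); [apply dpl_id|apply dpl_const].
    - apply (dpl_shift_plus (tsallis_density a)). exact Hdi.
    - apply (dpl_shift_minus (tsallis_density a)). exact Hdj. }
  pose proof (fermat_max gain 0 _ _ (Rmin_pos _ _ Hpi Hpj) Hmax Hgain). lra.
Qed.

Lemma entmax_stationary_gt d a z p i j : 1 < a -> is_entmax d a z p ->
  (i < d)%nat -> (j < d)%nat -> 0 < p i -> 0 < p j ->
  Rpower (p i) (a - 1) - (a - 1) * z i = Rpower (p j) (a - 1) - (a - 1) * z j.
Proof.
  intros Ha He Hi Hj Hpi Hpj.
  pose proof (entmax_stationary d a z p i j _ _ He Hi Hj Hpi Hpj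
    (derive_tsallis_density_gt a _ ltac:(lra) Hpi)
    (derive_tsallis_density_gt a _ ltac:(lra) Hpj)) as E.
  assert (Hform : forall k, Rpower (p k) (a - 1) - (a - 1) * z k =
    - (a - 1) * (z k + (1 - a * Rpower (p k) (a - 1)) / (a * (a - 1))) + 1 / a)
    by (intros; field; lra).
  rewrite !Hform, E. reflexivity.
Qed.

Lemma entmax_stationary_one d z p i j : is_entmax d 1 z p ->
  (i < d)%nat -> (j < d)%nat -> 0 < p i -> 0 < p j ->
  ln (p i) - z i = ln (p j) - z j.
Proof.
  intros He Hi Hj Hpi Hpj.
  pose proof (entmax_stationary d 1 z p i j _ _ He Hi Hj Hpi Hpj
    (derive_tsallis_density_one _ Hpi) (derive_tsallis_density_one _ Hpj)). lra.
Qed.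

Lemma xlogx_increment x t : 0 < t < x ->
  exists c, x - t < c < x /\ xlogx x - xlogx (x - t) = t * (ln c + 1).
Proof.
  intros Ht.
  destruct (MVT_cor2 xlogx (fun y => ln y + 1) (x - t) x) as [c [Hc Hcx]]; [lra| |].
  - intros c Hc. apply derive_xlogx. lra.
  - exists c. split; [lra|]. rewrite Hc. ring.
Qed.

(* Softmax has full support: the entropy gain -t ln t of moving mass t onto an
   empty coordinate beats any linear loss when t is small. *)
Lemma softmax_full_support d z p k : is_entmax d 1 z p -> (k < d)%nat -> 0 < p k.
Proof.
  intros [Hs Hopt] Hk. pose proof Hs as [Hnn Hsum].
  destruct (Rlt_le_dec 0 (p k)) as [|Hle]; [assumption|exfalso].
  assert (Hp0 : p k = 0) by (pose proof (Hnn k Hk); lra).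
  destruct (rsum_pos_term d p ltac:(lra)) as [m [Hm Hpm]].
  assert (Hkm : k <> m) by (intros ->; lra).
  set (L := z k - z m + ln (p m / 2)).
  set (t := Rmin (p m / 2) (exp L)).
  assert (Ht : 0 < t) by (apply Rmin_pos; [lra|apply exp_pos]).
  assert (Ht2 : t <= p m / 2) by apply Rmin_l.
  assert (HlnL : ln t <= L).
  { destruct (Rle_lt_or_eq_dec t (exp L) (Rmin_r _ _)) as [Hlt|Heq].
    - rewrite <- (ln_exp L). left. apply ln_increasing; assumption.
    - rewrite Heq, ln_exp. lra. }
  destruct (xlogx_increment (p m) t ltac:(lra)) as [c [Hc Hinc]].
  assert (Hlnc : ln (p m / 2) < ln c) by (apply ln_increasing; lra).
  assert (Hle_obj : entmax_obj d 1 z (pert p k m t) <= entmax_obj d 1 z p).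
  { apply Hopt, pert_simplex; (assumption || lra). }
  pose proof (entmax_obj_pert d 1 z p k m t Hkm Hk Hm) as Hdiff.
  unfold tsallis_density in Hdiff. destruct (Req_EM_T 1 1) as [_|]; [|lra].
  rewrite Hp0, Rplus_0_l in Hdiff.
  assert (Hx0 : xlogx 0 = 0) by (unfold xlogx; destruct (Rlt_dec 0 0); lra).
  assert (Hxt : xlogx t = t * ln t) by (unfold xlogx; destruct (Rlt_dec 0 t); lra).
  rewrite Hx0, Hxt in Hdiff.
  assert (Hgain : 0 < t * (z k - z m - ln t + ln c + 1)).
  { apply Rmult_lt_0_compat; [assumption|unfold L in HlnL; lra]. }
  lra.
Qed.

Definition rlim (F : R -> R) (L : R) : Prop :=
  forall eps, 0 < eps -> exists delta, 0 < delta /\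
    forall h, 0 < h < delta -> Rabs (F h - L) < eps.

Lemma rlim_limit1_in F L : rlim F L <-> limit1_in F (fun h => 0 < h) L 0.
Proof.
  unfold rlim, limit1_in, limit_in; simpl; unfold Rdist. split.
  - intros H eps Heps. destruct (H eps Heps) as [del [Hd H']].
    exists del; split; [lra|]. intros x [Hx Hx']. apply H'.
    rewrite Rminus_0_r, Rabs_right in Hx' by lra. lra.
  - intros H eps Heps. destruct (H eps ltac:(lra)) as [del [Hd H']].
    exists del; split; [lra|]. intros x Hx. apply H'. split; [lra|].
    rewrite Rminus_0_r, Rabs_right by lra. lra.
Qed.

Lemma rlim_plus F G a b : rlim F a -> rlim G b -> rlim (fun h => F h + G h) (a + b).
Proof. rewrite !rlim_limit1_in. apply limit_plus. Qed.

Lemma rlim_mult F G a b : rlim F a -> rlim G b -> rlim (fun h => F h * G h) (a * b).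
Proof. rewrite !rlim_limit1_in. apply limit_mul. Qed.

Lemma rlim_const c : rlim (fun _ => c) c.
Proof.
  intros eps He. exists 1; split; [lra|]. intros.
  rewrite Rminus_diag, Rabs_R0. exact He.
Qed.

Lemma rlim_id : rlim (fun h => h) 0.
Proof.
  intros eps He. exists eps; split; [exact He|]. intros h Hh.
  rewrite Rminus_0_r, Rabs_right; lra.
Qed.

Lemma rlim_unique F a b : rlim F a -> rlim F b -> a = b.
Proof.
  rewrite !rlim_limit1_in. apply single_limit.
  intros eps Heps. exists (eps / 2). split; [lra|].
  unfold Rdist. rewrite Rminus_0_r, Rabs_right; lra.
Qed.

Lemma rlim_eq F a b : rlim F a -> a = b -> rlim F b.
Proof. intros H <-; exact H. Qed.

Lemma rlim_local F G L r : 0 < r -> (forall h, 0 < h < r -> F h = G h) ->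
  rlim F L -> rlim G L.
Proof.
  intros Hr He H eps Heps. destruct (H eps Heps) as [del [Hd H']].
  exists (Rmin del r). split; [apply Rmin_pos; lra|]. intros h Hh.
  pose proof (Rmin_l del r); pose proof (Rmin_r del r).
  rewrite <- He by lra. apply H'. lra.
Qed.

Lemma dpl_right_deriv f x l : derivable_pt_lim f x l -> right_deriv f x l.
Proof.
  intros H eps Heps. destruct (H eps Heps) as [del Hd]. exists del.
  split; [apply cond_pos|]. intros h Hh. apply Hd; [lra|]. rewrite Rabs_right; lra.
Qed.

Lemma right_deriv_cont f x l : right_deriv f x l -> rlim (fun h => f (x + h)) (f x).
Proof.
  intros H. apply (rlim_local (fun h => f x + h * ((f (x + h) - f x) / h)) _ _ 1); [lra| |].
  - intros h Hh. field. lra.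
  - apply (rlim_eq _ (f x + 0 * l)); [|ring].
    apply rlim_plus; [apply rlim_const|apply rlim_mult; [apply rlim_id|exact H]].
Qed.

Lemma right_deriv_pos_near f x l : right_deriv f x l -> 0 < f x ->
  exists r, 0 < r /\ forall h, 0 < h < r -> 0 < f (x + h).
Proof.
  intros H Hpos. destruct (right_deriv_cont f x l H (f x) Hpos) as [r [Hr Hnear]].
  exists r; split; [exact Hr|]. intros h Hh.
  specialize (Hnear h Hh). apply Rabs_def2 in Hnear. lra.
Qed.

Lemma right_deriv_local_unique f g x a b r : 0 < r -> f x = g x ->
  (forall h, 0 < h < r -> f (x + h) = g (x + h)) ->
  right_deriv f x a -> right_deriv g x b -> a = b.
Proof.
  intros Hr H0 He Hf Hg. apply (rlim_unique (fun h => (g (x + h) - g x) / h)); [|exact Hg].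
  apply (rlim_local (fun h => (f (x + h) - f x) / h) _ _ r Hr); [|exact Hf].
  intros h Hh. rewrite H0, He by exact Hh. reflexivity.
Qed.

Lemma right_deriv_const c x : right_deriv (fun _ => c) x 0.
Proof.
  apply (rlim_local (fun _ => 0) _ _ 1); [lra| |apply rlim_const].
  intros h Hh. field. lra.
Qed.

Lemma right_deriv_plus f1 f2 x a b : right_deriv f1 x a -> right_deriv f2 x b ->
  right_deriv (fun y => f1 y + f2 y) x (a + b).
Proof.
  intros H1 H2.
  apply (rlim_local (fun h => (f1 (x + h) - f1 x) / h + (f2 (x + h) - f2 x) / h) _ _ 1);
    [lra| |apply rlim_plus; assumption].
  intros h Hh. field. lra.
Qed.

Lemma right_deriv_rsum (F : R -> nat -> R) (G : nat -> R) x n :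
  (forall k, (k < n)%nat -> right_deriv (fun a => F a k) x (G k)) ->
  right_deriv (fun a => rsum n (F a)) x (rsum n G).
Proof.
  induction n as [|n IH]; intros H; simpl; [apply right_deriv_const|].
  apply right_deriv_plus; [apply IH; intros; apply H|apply H]; lia.
Qed.

Lemma right_deriv_simplex_sum d (P : R -> nat -> R) (g : nat -> R) x :
  (forall a, x <= a -> rsum d (P a) = 1) ->
  (forall k, (k < d)%nat -> right_deriv (fun a => P a k) x (g k)) ->
  rsum d g = 0.
Proof.
  intros Hsum Hg.
  apply (right_deriv_local_unique (fun a => rsum d (P a)) (fun _ => 1) x _ _ 1); [lra| | |
    apply right_deriv_rsum; exact Hg|apply right_deriv_const].
  - apply Hsum. lra.
  - intros h Hh. apply Hsum. lra.
Qed.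

Definition slope (G : R -> R) (y0 G' y : R) : R :=
  if Req_EM_T y y0 then G' else (G y - G y0) / (y - y0).

Lemma slope_spec G y0 G' y : G y - G y0 = slope G y0 G' y * (y - y0).
Proof. unfold slope. destruct (Req_EM_T y y0) as [->|]; [ring|field; lra]. Qed.

Lemma slope_rlim G y0 G' F : derivable_pt_lim G y0 G' -> rlim F y0 ->
  rlim (fun h => slope G y0 G' (F h)) G'.
Proof.
  intros HG HF eps Heps. destruct (HG eps Heps) as [del Hd].
  destruct (HF del (cond_pos del)) as [r [Hr Hnear]]. exists r. split; [exact Hr|].
  intros h Hh. specialize (Hnear h Hh). unfold slope.
  destruct (Req_EM_T (F h) y0). { rewrite Rminus_diag, Rabs_R0. exact Heps. }
  specialize (Hd (F h - y0) ltac:(lra) Hnear).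
  replace (y0 + (F h - y0)) with (F h) in Hd by ring. exact Hd.
Qed.

Lemma right_deriv_comp f G x l G' : right_deriv f x l -> derivable_pt_lim G (f x) G' ->
  right_deriv (fun y => G (f y)) x (G' * l).
Proof.
  intros Hf HG.
  apply (rlim_local (fun h => slope G (f x) G' (f (x + h)) * ((f (x + h) - f x) / h)) _ _ 1);
    [lra| |].
  - intros h Hh. rewrite (slope_spec G (f x) G' (f (x + h))). field. lra.
  - apply rlim_mult; [|exact Hf].
    apply slope_rlim; [exact HG|exact (right_deriv_cont f x l Hf)].
Qed.

(** * Second-order expansion of exp *)

Lemma bound_from_derivative (psi psi' : R -> R) K n : 0 <= K ->
  (forall t, derivable_pt_lim psi t (psi' t)) -> psi 0 = 0 ->
  (forall t, Rabs t <= 1 -> Rabs (psi' t) <= K * Rabs t ^ n) ->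
  forall x, Rabs x <= 1 -> Rabs (psi x) <= K * Rabs x ^ S n.
Proof.
  intros HK Hd H0 Hb x Hx.
  destruct (MVT_abs psi psi' 0 x (fun c _ => Hd c)) as [c [Hc Hcx]].
  rewrite H0, Rminus_0_r, Rminus_0_r in Hc. rewrite Hc.
  assert (Hcabs : Rabs c <= Rabs x).
  { unfold Rmin, Rmax in Hcx. destruct (Rle_dec 0 x).
    - rewrite !Rabs_right by lra. lra.
    - rewrite Rabs_left1, (Rabs_left1 x) by lra. lra. }
  assert (Hpsi' : Rabs (psi' c) <= K * Rabs x ^ n).
  { apply (Rle_trans _ (K * Rabs c ^ n)); [apply Hb; lra|].
    apply Rmult_le_compat_l; [exact HK|]. apply pow_incr. split; [apply Rabs_pos|exact Hcabs]. }
  simpl. rewrite Rmult_comm, <- Rmult_assoc, (Rmult_comm K).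
  pose proof (Rabs_pos x). pose proof (Rabs_pos (psi' c)).
  rewrite (Rmult_assoc (Rabs x)). apply Rmult_le_compat_l; assumption.
Qed.

Lemma exp_third_order x : Rabs x <= 1 -> Rabs (exp x - 1 - x - x * x / 2) <= 3 * Rabs x ^ 3.
Proof.
  assert (Hexp : forall t, Rabs t <= 1 -> Rabs (exp t) <= 3 * Rabs t ^ 0).
  { intros t Ht. simpl. rewrite Rabs_right by (left; apply exp_pos).
    pose proof (Rle_abs t). pose proof exp_le_3.
    destruct (Rle_lt_or_eq_dec t 1 ltac:(lra)) as [Hlt|Heq].
    - pose proof (exp_increasing t 1 Hlt). lra.
    - rewrite Heq. lra. }
  assert (Hd0 : forall t, derivable_pt_lim (fun y => exp y - 1) t (exp t)).
  { intros t. apply (dpl_eq _ _ (exp t - 0)); [|ring].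
    apply dpl_minus; [apply derivable_pt_lim_exp|apply dpl_const]. }
  assert (Hd1 : forall t, derivable_pt_lim (fun y => exp y - 1 - y) t (exp t - 1)).
  { intros t. apply dpl_minus; [apply Hd0|apply dpl_id]. }
  assert (Hd2 : forall t,
    derivable_pt_lim (fun y => exp y - 1 - y - y * y / 2) t (exp t - 1 - t)).
  { intros t. apply (dpl_eq _ _ ((exp t - 1) - ((1 * t + t * 1) * / 2 + t * t * 0))).
    - apply dpl_minus; [apply Hd1|].
      apply (dpl_mult (fun y => y * y) (fun _ => / 2)); [apply dpl_mult; apply dpl_id|apply dpl_const].
    - field. }
  apply (bound_from_derivative _ _ 3 2 ltac:(lra) Hd2); [rewrite exp_0; field|].
  apply (bound_from_derivative _ _ 3 1 ltac:(lra) Hd1); [rewrite exp_0; ring|].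
  apply (bound_from_derivative _ _ 3 0 ltac:(lra) Hd0); [rewrite exp_0; ring|exact Hexp].
Qed.

Definition expq (x : R) : R :=
  if Req_EM_T x 0 then / 2 else (exp x - 1 - x) / (x * x).

Lemma exp_expq x : exp x = 1 + x + x * x * expq x.
Proof. unfold expq. destruct (Req_EM_T x 0) as [->|]; [rewrite exp_0; ring|field; assumption]. Qed.

Lemma expq_rlim F : rlim F 0 -> rlim (fun h => expq (F h)) (/ 2).
Proof.
  intros HF eps Heps.
  destruct (HF (Rmin 1 (eps / 3)) ltac:(apply Rmin_pos; lra)) as [del [Hdel Hnear]].
  exists del. split; [exact Hdel|]. intros h Hh.
  specialize (Hnear h Hh). rewrite Rminus_0_r in Hnear.
  pose proof (Rmin_l 1 (eps / 3)); pose proof (Rmin_r 1 (eps / 3)).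
  set (y := F h) in *. unfold expq. destruct (Req_EM_T y 0).
  { rewrite Rminus_diag, Rabs_R0. exact Heps. }
  assert (Hy : 0 < Rabs y) by (apply Rabs_pos_lt; assumption).
  replace ((exp y - 1 - y) / (y * y) - / 2) with ((exp y - 1 - y - y * y / 2) / (y * y))
    by (field; assumption).
  unfold Rdiv. rewrite Rabs_mult, Rabs_inv, Rabs_mult.
  apply (Rle_lt_trans _ (3 * Rabs y ^ 3 * / (Rabs y * Rabs y))).
  - apply Rmult_le_compat_r; [left; apply Rinv_0_lt_compat; nra|].
    apply exp_third_order. lra.
  - replace (3 * Rabs y ^ 3 * / (Rabs y * Rabs y)) with (3 * Rabs y) by (field; lra). lra.
Qed.

(** * The case alpha > 1 *)

Section EntmaxGt.

Variables (d : nat) (z : nat -> R) (alpha : R) (P : R -> nat -> R) (g : nat -> R).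
Hypothesis halpha : 1 < alpha.
Hypothesis hP : forall a, 1 <= a -> is_entmax d a z (P a).
Hypothesis hg : forall i, (i < d)%nat -> derivable_pt_lim (fun a => P a i) alpha (g i).

(* Off the support, a -> P a i is nonnegative with an interior minimum 0 at alpha. *)
Lemma gt_deriv_off_support i : (i < d)%nat -> P alpha i = 0 -> g i = 0.
Proof.
  intros Hi H0. cut (- g i = 0); [lra|].
  apply (fermat_max (fun a => - P a i) alpha _ (alpha - 1)); [lra| |].
  - intros y Hy. destruct (hP y ltac:(lra)) as [[Hnn _] _].
    specialize (Hnn i Hi). lra.
  - apply (derivable_pt_lim_opp (fun a => P a i)). exact (hg i Hi).
Qed.

Lemma gt_deriv_sum : rsum d g = 0.
Proof.
  apply (right_deriv_simplex_sum d P g alpha).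
  - intros a Ha. destruct (hP a ltac:(lra)) as [[_ Hs] _]. exact Hs.
  - intros k Hk. apply dpl_right_deriv, hg, Hk.
Qed.

(* tau_value a i = p_i(a)^(a-1) - (a-1) z_i equals -(a-1) tau(a) on the support
   (entmax_stationary_gt); tau_slope i is its derivative at alpha. *)
Definition tau_value (a : R) (i : nat) : R := Rpower (P a i) (a - 1) - (a - 1) * z i.

Definition tau_slope (i : nat) : R :=
  Rpower (P alpha i) (alpha - 1) * (ln (P alpha i) + (alpha - 1) * g i / P alpha i) - z i.

Lemma tau_value_deriv i : (i < d)%nat -> 0 < P alpha i ->
  derivable_pt_lim (fun a => tau_value a i) alpha (tau_slope i).
Proof.
  intros Hi Hp. unfold tau_value, tau_slope, Rpower.
  apply dpl_minus.
  - apply (dpl_comp (fun a => (a - 1) * ln (P a i)) exp); [|apply derivable_pt_lim_exp].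
    apply (dpl_eq _ _ ((1 - 0) * ln (P alpha i) + (alpha - 1) * (/ P alpha i * g i)));
      [|field; lra].
    apply (dpl_mult (fun a => a - 1) (fun a => ln (P a i))).
    + apply dpl_minus; [apply dpl_id|apply dpl_const].
    + apply (dpl_comp (fun a => P a i) ln); [exact (hg i Hi)|].
      apply derivable_pt_lim_ln. exact Hp.
  - apply (dpl_eq _ _ ((1 - 0) * z i + (alpha - 1) * 0)); [|ring].
    apply (dpl_mult (fun a => a - 1) (fun _ => z i)).
    + apply dpl_minus; [apply dpl_id|apply dpl_const].
    + apply dpl_const.
Qed.

(* The derivative of the threshold is shared by all support coordinates, because
   the support cannot shrink immediately to the right of alpha. *)
Lemma tau_slope_common i m : (i < d)%nat -> (m < d)%nat ->
  0 < P alpha i -> 0 < P alpha m -> tau_slope i = tau_slope m.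
Proof.
  intros Hi Hm Hpi Hpm.
  destruct (right_deriv_pos_near _ _ _ (dpl_right_deriv _ _ _ (hg i Hi)) Hpi) as [ri [Hri Hni]].
  destruct (right_deriv_pos_near _ _ _ (dpl_right_deriv _ _ _ (hg m Hm)) Hpm) as [rm [Hrm Hnm]].
  apply (right_deriv_local_unique (fun a => tau_value a i) (fun a => tau_value a m)
           alpha _ _ (Rmin ri rm)).
  - apply Rmin_pos; assumption.
  - apply (entmax_stationary_gt d); auto. apply hP. lra.
  - intros h Hh. pose proof (Rmin_l ri rm); pose proof (Rmin_r ri rm).
    apply (entmax_stationary_gt d); [lra|apply hP; lra|assumption|assumption| |].
    + apply Hni. lra.
    + apply Hnm. lra.
  - apply dpl_right_deriv, tau_value_deriv; assumption.
  - apply dpl_right_deriv, tau_value_deriv; assumption.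
Qed.

Definition support_weight (k : nat) : R :=
  if Rlt_dec 0 (P alpha k) then Rpower (P alpha k) (2 - alpha) else 0.

Lemma ptilde_support_weight i :
  ptilde d alpha (P alpha) i = support_weight i / rsum d support_weight.
Proof.
  unfold ptilde, support_weight at 1. destruct (Rlt_dec 0 (P alpha i)); [reflexivity|].
  unfold Rdiv. ring.
Qed.

Lemma support_weight_sum_pos : 0 < rsum d support_weight.
Proof.
  destruct (hP alpha ltac:(lra)) as [[_ Hs] _].
  destruct (rsum_pos_term d (P alpha) ltac:(lra)) as [m [Hm Hpm]].
  assert (Hw : forall k, (k < d)%nat -> 0 <= support_weight k).
  { intros k _. unfold support_weight.
    destruct (Rlt_dec 0 (P alpha k)); [left; apply exp_pos|lra]. }
  apply (Rlt_le_trans _ (support_weight m)); [|apply rsum_ge_term; assumption].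
  unfold support_weight. destruct (Rlt_dec 0 (P alpha m)); [apply exp_pos|lra].
Qed.

(* Differentiating the support equations: g is affine in the weights, with one
   unknown coefficient (the derivative of the threshold). *)
Lemma gt_deriv_affine m : (m < d)%nat -> 0 < P alpha m ->
  forall i, (i < d)%nat ->
  g i = (tau_slope m - tau_value alpha m / (alpha - 1)) / (alpha - 1) * support_weight i
        + (/ ((alpha - 1) ^ 2) * P alpha i + / (alpha - 1) * hneg (P alpha) i).
Proof.
  intros Hm Hpm i Hi. unfold support_weight, hneg, xlogx.
  destruct (Rlt_dec 0 (P alpha i)) as [Hpi|Hpi].
  - assert (Htau : tau_value alpha m = tau_value alpha i).
    { symmetry. apply (entmax_stationary_gt d); auto. apply hP. lra. }
    rewrite <- (tau_slope_common i m), Htau by assumption.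
    unfold tau_slope, tau_value.
    set (p := P alpha i). set (r := Rpower p (alpha - 1)).
    assert (Hr : 0 < r) by apply exp_pos.
    assert (Hw : Rpower p (2 - alpha) = p / r).
    { apply (Rmult_eq_reg_r r); [|lra]. unfold r. rewrite <- Rpower_plus.
      replace (2 - alpha + (alpha - 1)) with 1 by ring. rewrite Rpower_1 by exact Hpi.
      field. fold r. lra. }
    rewrite Hw. field. unfold p. repeat split; lra.
  - assert (Hp0 : P alpha i = 0).
    { destruct (hP alpha ltac:(lra)) as [[Hnn _] _]. specialize (Hnn i Hi). lra. }
    rewrite gt_deriv_off_support, Hp0 by assumption. ring.
Qed.

Lemma entmax_deriv_gt i : (i < d)%nat ->
  g i = (P alpha i - ptilde d alpha (P alpha) i) / ((alpha - 1) ^ 2)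
        + (hneg (P alpha) i - ptilde d alpha (P alpha) i * rsum d (fun j => hneg (P alpha) j))
          / (alpha - 1).
Proof.
  intros Hi. destruct (hP alpha ltac:(lra)) as [[_ Hs] _].
  destruct (rsum_pos_term d (P alpha) ltac:(lra)) as [m [Hm Hpm]].
  pose proof support_weight_sum_pos as HW.
  rewrite (zero_sum_affine d g support_weight _ _ (gt_deriv_affine m Hm Hpm) gt_deriv_sum
             ltac:(lra) i Hi).
  rewrite rsum_plus, !rsum_scal, ptilde_support_weight.
  change (rsum d (fun k => P alpha k)) with (rsum d (P alpha)).
  change (rsum d (fun j => hneg (P alpha) j)) with (rsum d (hneg (P alpha))).
  rewrite Hs. field. split; lra.
Qed.

End EntmaxGt.

(** * The case alpha = 1 *)

Section EntmaxOne.

Variables (d : nat) (z : nat -> R) (P : R -> nat -> R) (g : nat -> R).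
Hypothesis hd : (1 <= d)%nat.
Hypothesis hP : forall a, 1 <= a -> is_entmax d a z (P a).
Hypothesis hg : forall i, (i < d)%nat -> right_deriv (fun a => P a i) 1 (g i).

Lemma one_pos i : (i < d)%nat -> 0 < P 1 i.
Proof. intros Hi. apply (softmax_full_support d z); [apply hP; lra|exact Hi]. Qed.

Lemma one_deriv_sum : rsum d g = 0.
Proof.
  apply (right_deriv_simplex_sum d P g 1); [|exact hg].
  intros a Ha. destruct (hP a Ha) as [[_ Hs] _]. exact Hs.
Qed.

(* With u_k(h) = ln p_k(1+h), the stationarity condition at 1+h involves
   p_k(1+h)^h = exp(h u_k) = 1 + h u_k + h^2 u_k^2 expq(h u_k).  Subtracting h times
   the condition at 1 and dividing by h^2 shows that log_quotient k h does not
   depend on k for small h > 0; its limit as h -> 0+ is g_k/p_k + (ln p_k)^2/2. *)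
Definition log_quotient (k : nat) (h : R) : R :=
  (ln (P (1 + h) k) - ln (P 1 k)) / h
  + ln (P (1 + h) k) * ln (P (1 + h) k) * expq (h * ln (P (1 + h) k)).

Lemma log_quotient_rlim k : (k < d)%nat ->
  rlim (log_quotient k) (g k / P 1 k + ln (P 1 k) * ln (P 1 k) / 2).
Proof.
  intros Hk. pose proof (one_pos k Hk) as Hp.
  assert (Dln : right_deriv (fun a => ln (P a k)) 1 (/ P 1 k * g k)).
  { apply (right_deriv_comp (fun a => P a k) ln); [exact (hg k Hk)|].
    apply derivable_pt_lim_ln. exact Hp. }
  pose proof (right_deriv_cont _ _ _ Dln) as Cln. simpl in Cln.
  apply (rlim_eq _ (/ P 1 k * g k + ln (P 1 k) * ln (P 1 k) * / 2)); [|field; lra].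
  apply rlim_plus; [exact Dln|].
  apply rlim_mult; [apply rlim_mult; exact Cln|].
  apply expq_rlim. apply (rlim_eq _ (0 * ln (P 1 k))); [|ring].
  apply rlim_mult; [apply rlim_id|exact Cln].
Qed.

Lemma log_quotient_common i j : (i < d)%nat -> (j < d)%nat ->
  exists r, 0 < r /\ forall h, 0 < h < r -> log_quotient i h = log_quotient j h.
Proof.
  intros Hi Hj.
  destruct (right_deriv_pos_near _ _ _ (hg i Hi) (one_pos i Hi)) as [ri [Hri Hni]].
  destruct (right_deriv_pos_near _ _ _ (hg j Hj) (one_pos j Hj)) as [rj [Hrj Hnj]].
  exists (Rmin ri rj). split; [apply Rmin_pos; assumption|]. intros h Hh.
  pose proof (Rmin_l ri rj); pose proof (Rmin_r ri rj).
  pose proof (entmax_stationary_gt d (1 + h) z (P (1 + h)) i j ltac:(lra)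
    (hP (1 + h) ltac:(lra)) Hi Hj (Hni h ltac:(lra)) (Hnj h ltac:(lra))) as Hh1.
  pose proof (entmax_stationary_one d z (P 1) i j (hP 1 ltac:(lra)) Hi Hj
    (one_pos i Hi) (one_pos j Hj)) as Hh0.
  replace (1 + h - 1) with h in Hh1 by ring. unfold Rpower in Hh1.
  rewrite !exp_expq in Hh1.
  unfold log_quotient.
  set (ui := ln (P (1 + h) i)) in *. set (uj := ln (P (1 + h) j)) in *.
  set (ei := expq (h * ui)) in *. set (ej := expq (h * uj)) in *.
  assert (Hdiff : (ui - ln (P 1 i)) / h + ui * ui * ei - ((uj - ln (P 1 j)) / h + uj * uj * ej)
    = ((1 + h * ui + h * ui * (h * ui) * ei - h * z i)
       - (1 + h * uj + h * uj * (h * uj) * ej - h * z j)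
       - h * ((ln (P 1 i) - z i) - (ln (P 1 j) - z j))) / (h * h)) by (field; lra).
  apply Rminus_diag_uniq. rewrite Hdiff, Hh1, Hh0. field. lra.
Qed.

Lemma one_deriv_common i j : (i < d)%nat -> (j < d)%nat ->
  g i / P 1 i + ln (P 1 i) * ln (P 1 i) / 2 = g j / P 1 j + ln (P 1 j) * ln (P 1 j) / 2.
Proof.
  intros Hi Hj. destruct (log_quotient_common i j Hi Hj) as [r [Hr Heq]].
  apply (rlim_unique (log_quotient j)); [|exact (log_quotient_rlim j Hj)].
  apply (rlim_local (log_quotient i) _ _ r Hr Heq). exact (log_quotient_rlim i Hi).
Qed.

Lemma entmax_deriv_one i : (i < d)%nat ->
  g i = (hneg (P 1) i * ln (P 1 i) - P 1 i * rsum d (fun j => hneg (P 1) j * ln (P 1 j))) / 2.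
Proof.
  intros Hi. assert (H0 : (0 < d)%nat) by lia.
  set (u := fun k => - / 2 * (P 1 k * (ln (P 1 k) * ln (P 1 k)))).
  assert (Haff : forall k, (k < d)%nat ->
    g k = (g 0%nat / P 1 0%nat + ln (P 1 0%nat) * ln (P 1 0%nat) / 2) * P 1 k + u k).
  { intros k Hk. rewrite <- (one_deriv_common k 0 Hk H0). unfold u.
    pose proof (one_pos k Hk). field. lra. }
  destruct (hP 1 ltac:(lra)) as [[_ Hs] _].
  rewrite (zero_sum_affine d g (P 1) u _ Haff one_deriv_sum ltac:(lra) i Hi), Hs.
  assert (Hh : forall k, (k < d)%nat -> hneg (P 1) k * ln (P 1 k) = 2 * u k).
  { intros k Hk. pose proof (one_pos k Hk). unfold u, hneg, xlogx.
    destruct (Rlt_dec 0 (P 1 k)); [field|lra]. }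
  rewrite (rsum_ext d _ (fun k => 2 * u k) Hh), rsum_scal, Hh by exact Hi. field.
Qed.

End EntmaxOne.

Theorem proposition1 (d : nat) (z : nat -> R) (alpha : R)
  (P : R -> nat -> R) (g : nat -> R)
  (hd : (1 <= d)%nat) (halpha : 1 <= alpha)
  (hP : forall a, 1 <= a -> is_entmax d a z (P a)) :
  (1 < alpha ->
     (forall i, (i < d)%nat -> derivable_pt_lim (fun a => P a i) alpha (g i)) ->
     forall i, (i < d)%nat ->
       g i = (P alpha i - ptilde d alpha (P alpha) i) / ((alpha - 1) ^ 2)
             + (hneg (P alpha) i
                - ptilde d alpha (P alpha) i * rsum d (fun j => hneg (P alpha) j))
               / (alpha - 1))
  /\
  (alpha = 1 ->
     (forall i, (i < d)%nat -> right_deriv (fun a => P a i) 1 (g i)) ->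
     forall i, (i < d)%nat ->
       g i = (hneg (P 1) i * ln (P 1 i)
              - P 1 i * rsum d (fun j => hneg (P 1) j * ln (P 1 j))) / 2).
Proof.
  split.
  - intros Hgt Hg. exact (entmax_deriv_gt d z alpha P g Hgt hP Hg).
  - intros _ Hg. exact (entmax_deriv_one d z P g hd hP Hg).
Qed.
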